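(* Let $L$ be a regular language over a nonempty finite alphabet $A$, and let $\mathcal{A}_L$ be the minimal automaton of $L$. Then the following four conditions are equivalent: (1) $\mathcal{A}_L$ is a zero automaton; (2) $L$ is a language with zero, i.e. the syntactic monoid of $L$ has a zero element; (3) $L$ obeys the zero-one law, i.e. $\mu(L)=\lim_{n\to\infty}\mu_n(L)$ exists and $\mu(L)\in\{0,1\}$; (4) $L$ is recognised by a quasi-zero automaton.
   Context: All automata are complete, deterministic, finite and accessible: $\mathcal{A}=\langle Q,A,\cdot,q_0,F\rangle$ with transition function $\cdot:Q\times A\to Q$ extended to words, and $L(\mathcal{A})=\{w\in A^*: q_0\cdot w\in F\}$. For a language $L\subseteq A^*$, $\mu_n(L)=|L\cap A^n|/|A|^n$ and $\mu(L)=\lim_{n\to\infty}\mu_n(L)$ when the limit exists; $L$ obeys the zero-one law (is a zero-one language) if $L$ is regular, $\mu(L)$ exists and $\mu(L)\in\{0,1\}$. The syntactic monoid of $L$ is $A^*/\sim_L$ where $u\sim_L v$ iff for all $x,y\in A^*$, $xuy\in L\Leftrightarrow xvy\in L$. An element $0$ of a monoid $M$ is a zero if $0m=m0=0$ for all $m\in M$. A state $q$ is a sink state if $q\cdot a=q$ for all $a\in A$. A word $w$ is synchronising for $\mathcal{A}$ if there is a state $q$ with $p\cdot w=q$ for all $p\in Q$; $\mathcal{A}$ is synchronising if it has a synchronising word. A zero automaton is a synchronising automaton having a sink state. A strongly connected sink component of $\mathcal{A}$ is a nonempty set $P\subseteq Q$ such that every state of $P$ is reachable (by some word) from every other state of $P$,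 and no state outside $P$ is reachable from a state of $P$; $\mathrm{Sink}(\mathcal{A})$ denotes the family of all strongly connected sink components. $\mathcal{A}$ is quasi-zero if either $\bigcup\mathrm{Sink}(\mathcal{A})\subseteq F$ or $\bigcup\mathrm{Sink}(\mathcal{A})\cap F=\emptyset$. *)

From HB Require Import structures.
From mathcomp Require Import all_boot all_order all_algebra.
Set Implicit Arguments. Unset Strict Implicit.
 Unset Printing Implicit Defensive.
Import Order.TTheory GRing.Theory Num.Theory.

Record dfa (A : finType) := DFA {
  state : finType;
  init : state;
  trans : state -> A -> state;
  final : pred state }.
Arguments init {A} d.
Arguments trans {A d} _ _.
Arguments final {A} d _.

Section Automata.
Variable A : finType.
Implicit Types (M : dfa A) (L : seq A -> bool).

Definition delta_star M (q : state M) (w : seq A) : state M := foldl (@trans A M) q w.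

Definition accepts M (w : seq A) : bool := final M (delta_star (init M) w).

Definition recognizes M L : Prop := forall w, accepts M w = L w.

Definition accessible M : Prop := forall q : state M, exists w, delta_star (init M) w = q.

Definition regular L : Prop := exists M : dfa A, accessible M /\ recognizes M L.

Definition minimal_automaton_of M L : Prop :=
  [/\ accessible M, recognizes M L &
      forall M' : dfa A, accessible M' -> recognizes M' L -> #|state M| <= #|state M'| ].

Definition sink_state M (q : state M) : Prop := forall a, trans q a = q.

Definition synchronising_word M (w : seq A) : Prop :=
  exists q : state M, forall p : state M, delta_star p w = q.

Definition synchronising M : Prop := exists w, synchronising_word M w.

Definition zero_automaton M : Prop := synchronising M /\ exists q : state M, sink_state q.

Definition syntactic_eq L (u v : seq A) : Prop :=
  forall x y : seq A, L (x ++ u ++ y) = L (x ++ v ++ y).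

Definition language_with_zero L : Prop :=
  exists z : seq A, forall m : seq A,
    syntactic_eq L (z ++ m) z /\ syntactic_eq L (m ++ z) z.

Definition mu_n L (n : nat) : rat :=
  (#|[set w : n.-tuple A | L w]|%:R / (#|A| ^ n)%:R)%R.

Definition converges (u : nat -> rat) (l : rat) : Prop :=
  forall eps : rat, (0 < eps)%R -> exists N, forall n, N <= n -> (`|u n - l| < eps)%R.

Definition zero_one_language L : Prop :=
  regular L /\ (converges (mu_n L) 0%R \/ converges (mu_n L) 1%R).

Definition reachable M (p q : state M) : Prop := exists w, delta_star p w = q.

Definition strongly_connected_sink_component M (P : {set state M}) : Prop :=
  [/\ P != set0,
      (forall p q, p \in P -> q \in P -> reachable p q) &
      (forall p q, p \in P -> reachable p q -> q \in P)].

Definition in_sink_union M (q : state M) : Prop :=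
  exists P : {set state M}, strongly_connected_sink_component P /\ q \in P.

Definition quasi_zero M : Prop :=
  (forall q : state M, in_sink_union q -> final M q) \/
  (forall q : state M, in_sink_union q -> ~~ final M q).

End Automata.

From HB Require Import structures.
From mathcomp Require Import all_boot all_order all_algebra.
From mathcomp Require Import zify lra.
From Stdlib Require Import ClassicalEpsilon.
Import Order.TTheory GRing.Theory Num.Theory.
Set Implicit Arguments. Unset Strict Implicit. Unset Printing Implicit Defensive.

(* A state is recurrent when it is reachable back from every state it reaches;
   these are exactly the states of the strongly connected sink components.
   The recurrent states are closed under transitions and reachable from
   everywhere within some K letters, so from any state at most |A|^K - 1 of the
   |A|^K words of length K avoid them: the proportion of words of length n
   ending in a transient state decays geometrically.  Conversely, if a
   recurrent state p is reached by u, then for infinitely many n a fixed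
   positive proportion of the words of length n lead to p: by pigeonhole a
   share 1/|Q| of the words of length n from p end in one state r, and a
   fixed word leads back from r to p.  Hence mu_n(L) tends to 0 or 1 exactly
   when the recurrent states are all rejecting or all accepting.  In the
   minimal automaton indistinguishable states coincide; this turns a
   quasi-zero automaton into one with a single recurrent state, a sink
   reachable from everywhere, and identifies the state reached by a zero of
   the syntactic monoid as such a sink. *)

Lemma converges_sub0 (u : nat -> rat) l : converges u l <-> converges (fun n => (l - u n)%R) 0.
Proof.
by split=> conv eps /conv [N0 near_l]; exists N0 => n /near_l; rewrite subr0 distrC.
Qed.

Lemma converges_ratio0 (u : nat -> rat) (f g : nat -> nat) :
  (forall n, 0 < g n) -> (forall n, u n = ((f n)%:R / (g n)%:R)%R) ->
  converges u 0 <-> forall C, exists N0, forall n, N0 <= n -> C * f n < g n.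
Proof.
move=> g_gt0 def_u; have g_gt0R n : (0 < (g n)%:R :> rat)%R by rewrite ltr0n.
split=> [conv C | small eps eps_gt0].
  have inv_gt0 : (0 < (C.+1)%:R^-1 :> rat)%R by rewrite invr_gt0 ltr0n.
  have [N0 near0] := conv _ inv_gt0.
  exists N0 => n /near0; rewrite def_u subr0 ger0_norm ?divr_ge0 // ltr_pdivrMr //.
  rewrite mulrC ltr_pdivlMr ?ltr0n // -natrM ltr_nat mulnS; lia.
pose C := Num.Def.archi_bound eps^-1.
have lt_C : (1 < eps * C%:R)%R.
  rewrite -ltr_pdivrMl // mulr1; apply: archi_boundP; rewrite invr_ge0; exact: ltW.
have [N0 small_C] := small C; exists N0 => n /small_C.
rewrite def_u subr0 ger0_norm ?divr_ge0 // ltr_pdivrMr // -(ltr_nat rat) natrM.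
have := g_gt0R n; have : (0 <= (f n)%:R :> rat)%R by [].
move: ((f n)%:R)%R ((g n)%:R)%R => x y; nra.
Qed.

Section Automata.
Variable A : finType.
Hypothesis A_nonempty : 0 < #|A|.
Implicit Types M : dfa A.

Lemma delta_star_cat M (q : state M) u v :
  delta_star q (u ++ v) = delta_star (delta_star q u) v.
Proof. by rewrite /delta_star foldl_cat. Qed.

Lemma sink_delta_star M (s : state M) u : sink_state s -> delta_star s u = s.
Proof. by move=> hs; elim: u => //= a u; rewrite hs. Qed.

Fixpoint nwords M (S : pred (state M)) (q : state M) (n : nat) : nat :=
  if n is n'.+1 then \sum_(a : A) nwords S (trans q a) n' else S q.

Lemma sum_tupleS (F : seq A -> nat) n :
  \sum_(w : n.+1.-tuple A) F w = \sum_(a : A) \sum_(w : n.-tuple A) F (a :: w).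
Proof.
rewrite pair_big (reindex (fun p : A * n.-tuple A => [tuple of p.1 :: p.2])) //=.
exists (fun t : n.+1.-tuple A => (thead t, [tuple of behead t])).
  by move=> [a t] _; congr pair; apply: val_inj.
by move=> [[|a s] //= ?] _; apply: val_inj.
Qed.

Lemma nwords_tuple M S (q : state M) n :
  nwords S q n = \sum_(w : n.-tuple A) S (delta_star q w).
Proof.
elim: n q => [|n IHn] q /=.
  by rewrite (big_pred1 [tuple]) // => t; apply/esym/eqP/val_inj; rewrite tuple0.
by rewrite (sum_tupleS (fun w => S (delta_star q w) : nat)); apply: eq_bigr => a _; apply: IHn.
Qed.

Lemma leq_nwords M (S S' : pred (state M)) q n :
  (forall r, S r -> S' r) -> nwords S q n <= nwords S' q n.
Proof.
move=> sSS'; elim: n q => [|n IHn] q /=; last exact: leq_sum.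
by case: (boolP (S q)) => // /sSS' ->.
Qed.

Lemma nwordsC M (S : pred (state M)) q n : nwords S q n + nwords (predC S) q n = #|A| ^ n.
Proof.
elim: n q => [|n IHn] q /=; first by case: (S q).
by rewrite -big_split (eq_bigr (fun _ => #|A| ^ n)) ?sum_nat_const ?expnS.
Qed.

Lemma nwords_le M (S : pred (state M)) q n : nwords S q n <= #|A| ^ n.
Proof. by rewrite -(nwordsC S q n) leq_addr. Qed.

Lemma nwordsD M (S : pred (state M)) q m n :
  nwords S q (m + n) = \sum_(r : state M) nwords (pred1 r) q m * nwords S r n.
Proof.
elim: m q => [|m IHm] q /=.
  rewrite (bigD1 q) //= eqxx mul1n big1 ?addn0 // => r /negbTE.
  by rewrite eq_sym => ->.
rewrite (eq_bigr _ (fun a _ => IHm (trans q a))) exchange_big /=.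
by apply: eq_bigr => r _; rewrite big_distrl.
Qed.

Lemma nwords_mul_le M (S : pred (state M)) q r m n :
  nwords (pred1 r) q m * nwords S r n <= nwords S q (m + n).
Proof. by rewrite nwordsD (bigD1 r) //= leq_addr. Qed.

Lemma nwords_gt0 M (S : pred (state M)) q w : S (delta_star q w) -> 0 < nwords S q (size w).
Proof.
elim: w q => [|a w IHw] q /=; first by move=> ->.
move=> /(IHw (trans q a)) pos_w; rewrite (bigD1 a) //=.
exact: leq_trans pos_w (leq_addr _ _).
Qed.

Lemma nwords_gt0_reachable M (q r : state M) n : 0 < nwords (pred1 r) q n -> reachable q r.
Proof.
elim: n q => [|n IHn] q /=; first by case: eqP => // <- _; exists [::].
rewrite lt0n sum_nat_eq0 negb_forall => /existsP [a]; rewrite -lt0n => /IHn [w <-].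
by exists (a :: w).
Qed.

Lemma nwords_predT M (q : state M) n : nwords predT q n = #|A| ^ n.
Proof.
elim: n q => [|n IHn] q //=.
by rewrite (eq_bigr (fun _ => #|A| ^ n)) ?sum_nat_const ?expnS.
Qed.

Lemma sum_nwords_pred1 M (q : state M) n : \sum_(r : state M) nwords (pred1 r) q n = #|A| ^ n.
Proof.
rewrite -(nwords_predT q n) -{2}[n]addn0 nwordsD.
by apply: eq_bigr => r _; rewrite muln1.
Qed.

(* [f n / |A|^n] tends to 0, stated without division *)
Definition negligible (f : nat -> nat) : Prop :=
  forall C, exists N0, forall n, N0 <= n -> C * f n < #|A| ^ n.

Lemma negligible_le (f g : nat -> nat) : (forall n, f n <= g n) -> negligible g -> negligible f.
Proof.
move=> le_fg neg_g C; have [N0 hN0] := neg_g C; exists N0 => n /hN0.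
exact/leq_ltn_trans/leq_mul.
Qed.

Lemma reachable_trans M (p q r : state M) : reachable p q -> reachable q r -> reachable p r.
Proof. by case=> [u <-] [v <-]; exists (u ++ v); rewrite delta_star_cat. Qed.

Definition edge M : rel (state M) := fun p q => [exists a, trans p a == q].

Lemma reachableP M (p q : state M) : reachable p q <-> connect (@edge M) p q.
Proof.
split=> [[w <-] | /connectP [s]].
  elim: w p => [|a w IHw] p; first exact: connect0.
  by apply: connect_trans (IHw (trans p a)); apply/connect1/existsP; exists a.
elim: s p => [|r s IHs] p /=; first by move=> _ ->; exists [::].
by case/andP => /existsP [a /eqP <-] /IHs /[apply] [[w hw]]; exists (a :: w).
Qed.

Definition recurrent M (q : state M) : bool :=
  [forall r, connect (@edge M) q r ==> connect (@edge M) r q].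

Lemma recurrentP M (q : state M) :
  reflect (forall r, reachable q r -> reachable r q) (recurrent q).
Proof.
apply: (iffP forallP) => [rec_q r /reachableP qr | rec_q r].
  by apply/reachableP; apply: (implyP (rec_q r)).
by apply/implyP => /reachableP /rec_q /reachableP.
Qed.

Lemma in_sink_unionP M (q : state M) : in_sink_union q <-> recurrent q.
Proof.
split=> [[P [[_ scP clP] Pq]] | /recurrentP rec_q].
  by apply/recurrentP => r qr; apply: scP (clP _ _ Pq qr) Pq.
exists [set r | connect (@edge M) q r]; split; last by rewrite inE connect0.
split=> [|p r|p r]; rewrite ?inE.
- by apply/set0Pn; exists q; rewrite inE connect0.
- by move=> /reachableP /rec_q pq /reachableP; apply: reachable_trans.
- by move=> /reachableP qp /(reachable_trans qp) /reachableP.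
Qed.

Lemma recurrent_delta_star M (q : state M) w : recurrent q -> recurrent (delta_star q w).
Proof.
move=> /recurrentP rec_q; apply/recurrentP => r /(reachable_trans (ex_intro _ w erefl)).
by move=> /rec_q /reachable_trans; apply; exists w.
Qed.

Lemma recurrent_trans M (q : state M) a : recurrent q -> recurrent (trans q a).
Proof. exact: (@recurrent_delta_star M q [:: a]). Qed.

Lemma exists_recurrent M (q : state M) : exists w, recurrent (delta_star q w).
Proof.
pose R r := [set x | connect (@edge M) r x].
have [r qr min_r] := arg_minnP (fun r => #|R r|) (connect0 (@edge M) q).
suff rec_r : recurrent r by have /reachableP [w hw] := qr; exists w; rewrite hw.
apply/forallP => x; apply/implyP => rx.
have sub_xr : R x \subset R r by apply/subsetP => y; rewrite !inE; apply: connect_trans.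
have eq_xr : R x = R r by apply/eqP; rewrite eqEcard sub_xr min_r //; apply: connect_trans rx.
have : r \in R r by rewrite inE connect0.
by rewrite -eq_xr inE.
Qed.

Lemma leq_mul_expnS b j : j * b ^ j <= b * b.+1 ^ j.
Proof.
suff : b ^ j.+1 + j * b ^ j <= b * b.+1 ^ j by apply: leq_trans; rewrite leq_addl.
elim: j => [|j IHj]; first by rewrite expn1 !expn0 mul0n addn0 muln1.
have le_pow : b ^ j <= b.+1 ^ j by elim: (j) => [|k IHk]; rewrite ?expnS ?leq_mul.
move: IHj le_pow; rewrite !expnS; nia.
Qed.

Section Absorption.
Variables (M : dfa A) (U : pred (state M)).
Hypothesis U_closed : forall q a, U q -> U (trans q a).

Lemma closed_delta_star q w : U q -> U (delta_star q w).
Proof. by elim: w q => //= a w IHw q /(U_closed a) /IHw. Qed.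

Lemma nwords_predC_closed q n : U q -> nwords (predC U) q n = 0.
Proof.
elim: n q => [|n IHn] q Uq /=; first by rewrite Uq.
by rewrite big1 // => a _; apply/IHn/U_closed.
Qed.

Lemma absorption_time : (forall q, exists w, U (delta_star q w)) ->
  exists2 K, 0 < K & forall q, 0 < nwords U q K.
Proof.
have [a0 _] := card_gt0P A_nonempty; move=> /fin_all_exists [w Uw].
set K := (\max_q size (w q)).+1; exists K => // q.
have le_wq : size (w q) <= K by apply/leqW/(leq_bigmax (F := fun q => size (w q))).
have -> : K = size (w q ++ nseq (K - size (w q)) a0) by rewrite size_cat size_nseq subnKC.
by apply: nwords_gt0; rewrite delta_star_cat; apply/closed_delta_star/Uw.
Qed.

Section UniformTime.
Variable K : nat.
Hypotheses (K_gt0 : 0 < K) (U_reached : forall q, 0 < nwords U q K).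
Let b := (#|A| ^ K).-1.
Let D n := \max_(r : state M) nwords (predC U) r n.

Lemma nwords_predC_step q n : nwords (predC U) q (K + n) <= b * D n.
Proof.
rewrite nwordsD.
apply: (@leq_trans (\sum_r nwords (pred1 r) q K * (predC U r * D n))).
  apply: leq_sum => r _ /=; case: (boolP (U r)) => [Ur|_].
    by rewrite nwords_predC_closed // muln0.
  by rewrite mul1n leq_mul2l (leq_bigmax (F := fun r => nwords (predC U) r n)) orbT.
under eq_bigr do rewrite mulnA.
rewrite -big_distrl leq_mul2r; apply/orP; right.
have -> : \sum_r nwords (pred1 r) q K * predC U r = nwords (predC U) q K.
  by rewrite -{2}[K]addn0 nwordsD.
by have := nwordsC U q K; have := U_reached q; rewrite /b; lia.
Qed.

Lemma max_nwords_predC_geometric j i : D (j * K + i) <= b ^ j * #|A| ^ i.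
Proof.
elim: j => [|j IHj].
  by rewrite mul0n add0n expn0 mul1n; apply/bigmax_leqP => r _; apply: nwords_le.
rewrite mulSn -addnA expnS -mulnA.
apply: (@leq_trans (b * D (j * K + i))); last by rewrite leq_mul2l IHj orbT.
by apply/bigmax_leqP => r _; apply: nwords_predC_step.
Qed.

Lemma max_nwords_predC_le n : n %/ K * D n <= b * #|A| ^ n.
Proof.
have def_n := divn_eq n K; set j := n %/ K in def_n *; set i := n %% K in def_n.
rewrite def_n; apply: (@leq_trans (j * (b ^ j * #|A| ^ i))).
  by rewrite leq_mul2l max_nwords_predC_geometric orbT.
have def_b : b.+1 = #|A| ^ K by rewrite prednK // expn_gt0 A_nonempty.
by rewrite expnD [j * K]mulnC expnM !mulnA -def_b leq_mul2r leq_mul_expnS orbT.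
Qed.

Lemma negligible_nwords_predC q : negligible (nwords (predC U) q).
Proof.
move=> C; exists ((C * b).+1 * K) => n le_n.
have le_j : (C * b).+1 <= n %/ K by rewrite -(mulnK (C * b).+1 K_gt0) leq_div2r.
have le_f : n %/ K * nwords (predC U) q n <= b * #|A| ^ n.
  apply: leq_trans (max_nwords_predC_le n); rewrite leq_mul2l.
  by rewrite (leq_bigmax (F := fun r => nwords (predC U) r n)) orbT.
have : 0 < #|A| ^ n by rewrite expn_gt0 A_nonempty.
move: le_j le_f; nia.
Qed.

End UniformTime.

Lemma negligible_unabsorbed q :
  (forall r, exists w, U (delta_star r w)) -> negligible (nwords (predC U) q).
Proof. by move=> /absorption_time [K K_gt0 reached]; apply: (negligible_nwords_predC K_gt0 reached q). Qed.

End Absorption.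

Lemma negligible_transient M (q : state M) : negligible (nwords (predC (@recurrent M)) q).
Proof. exact: negligible_unabsorbed (@recurrent_trans M) q (@exists_recurrent M). Qed.

Lemma exists_nwords_pred1_ge M (q : state M) n :
  exists r, #|A| ^ n <= #|state M| * nwords (pred1 r) q n.
Proof.
have states_gt0 : 0 < #|state M| by apply/card_gt0P; exists q.
have [r max_r] := bigop.eq_bigmax (fun r => nwords (pred1 r) q n) states_gt0.
exists r; rewrite -max_r -(sum_nwords_pred1 q n) -sum_nat_const.
by apply: leq_sum => r' _; apply: (leq_bigmax (F := fun r => nwords (pred1 r) q n)).
Qed.

Lemma recurrent_return M (p : state M) : recurrent p ->
  exists C, forall n, exists2 t, n <= t & #|A| ^ t <= C * nwords (pred1 p) p t.
Proof.
move=> /recurrentP rec_p.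
have /fin_all_exists [v back] : forall r, exists v, reachable p r -> delta_star r v = p.
  move=> r; case: (boolP (connect (@edge M) p r)) => [/reachableP/rec_p [v <-]|not_pr].
    by exists v.
  by exists [::] => /reachableP; rewrite (negbTE not_pr).
pose K := \max_r size (v r).
exists (#|A| ^ K * #|state M|) => n.
have [r le_r] := exists_nwords_pred1_ge p n.
have pr : reachable p r.
  have states_gt0 : 0 < #|state M| by apply/card_gt0P; exists p.
  apply: (nwords_gt0_reachable (n := n)); rewrite -(ltn_pmul2l states_gt0).
  by rewrite muln0; apply: leq_trans le_r; rewrite expn_gt0 A_nonempty.
have rp : 0 < nwords (pred1 p) r (size (v r)) by apply: nwords_gt0; rewrite back //=.
exists (n + size (v r)); first exact: leq_addr.
apply: (@leq_trans (#|A| ^ K * (#|state M| * nwords (pred1 r) p n))).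
  rewrite expnD mulnC leq_mul // leq_pexp2l //.
  exact: (leq_bigmax (F := fun r => size (v r))).
rewrite -mulnA leq_mul2l; apply/orP; right; rewrite leq_mul2l; apply/orP; right.
exact: leq_trans (leq_pmulr _ rp) (nwords_mul_le _ _ _ _ _).
Qed.

Lemma recurrent_not_negligible M (S : pred (state M)) p :
  accessible M -> recurrent p -> S p -> ~ negligible (nwords S (init M)).
Proof.
move=> acc_M rec_p Sp neg_S.
have [u def_p] := acc_M p.
have [C ret_p] := recurrent_return rec_p.
have [N0 small] := neg_S (#|A| ^ size u * C).
have [t le_t ret_t] := ret_p N0.
have := small (size u + t) (leq_trans le_t (leq_addl _ _)); rewrite ltnNge => /negP; apply.
rewrite expnD -mulnA leq_mul2l; apply/orP; right.
apply: leq_trans ret_t _; rewrite leq_mul2l; apply/orP; right.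
have init_p : 0 < nwords (pred1 p) (init M) (size u) by apply: nwords_gt0; rewrite def_p /=.
apply: leq_trans (nwords_mul_le S (init M) p (size u) t).
by apply: leq_trans (leq_pmull _ init_p); apply: leq_nwords => r /eqP ->.
Qed.

Lemma quasi_zero_negligible M : accessible M ->
  quasi_zero M <->
  negligible (nwords (final M) (init M)) \/ negligible (nwords (predC (final M)) (init M)).
Proof.
move=> acc_M; have transient := negligible_transient (init M).
split=> [[sink_final|sink_nfinal] | [neg_final|neg_nfinal]].
- right; apply: negligible_le transient => n; apply: leq_nwords => r /=.
  by apply: contra => /in_sink_unionP /sink_final.
- left; apply: negligible_le transient => n; apply: leq_nwords => r /=.
  by apply: contraL => /in_sink_unionP /sink_nfinal.
- right=> q /in_sink_unionP rec_q; apply/negP => fin_q.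
  exact: recurrent_not_negligible acc_M rec_q fin_q neg_final.
- left=> q /in_sink_unionP rec_q; apply/negPn/negP => nfin_q.
  exact: recurrent_not_negligible acc_M rec_q nfin_q neg_nfinal.
Qed.

Lemma mu_n_nwords M L n : recognizes M L ->
  mu_n L n = ((nwords (final M) (init M) n)%:R / (#|A| ^ n)%:R)%R.
Proof.
move=> rec_M; rewrite /mu_n nwords_tuple -sum1_card big_mkcond /=.
by congr (_%:R / _)%R; apply: eq_bigr => w _; rewrite inE -rec_M /accepts; case: final.
Qed.

Lemma one_sub_mu_n M L n : recognizes M L ->
  (1 - mu_n L n = (nwords (predC (final M)) (init M) n)%:R / (#|A| ^ n)%:R)%R.
Proof.
move=> rec_M; have nz : ((#|A| ^ n)%:R != 0 :> rat)%R.
  by rewrite pnatr_eq0 -lt0n expn_gt0 A_nonempty.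
rewrite (mu_n_nwords n rec_M) -{1}(divff nz) -mulrBl.
by rewrite -{1}(nwordsC (final M) (init M) n) natrD addrAC subrr add0r.
Qed.

Lemma zero_one_negligible M L : recognizes M L ->
  converges (mu_n L) 0 \/ converges (mu_n L) 1 <->
  negligible (nwords (final M) (init M)) \/ negligible (nwords (predC (final M)) (init M)).
Proof.
move=> rec_M; have pos n : 0 < #|A| ^ n by rewrite expn_gt0 A_nonempty.
have conv0 := converges_ratio0 pos (fun n => mu_n_nwords n rec_M).
have conv1 := converges_ratio0 (u := fun n => (1 - mu_n L n)%R) pos (fun n => one_sub_mu_n n rec_M).
have sub1 := converges_sub0 (mu_n L) 1.
split=> [[/conv0|/sub1/conv1] | [/conv0|/conv1/sub1]]; by [left|right].
Qed.

Lemma quasi_zero_zero_one M L : accessible M -> recognizes M L ->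
  quasi_zero M <-> converges (mu_n L) 0 \/ converges (mu_n L) 1.
Proof.
move=> acc_M rec_M.
exact: iff_trans (quasi_zero_negligible acc_M) (iff_sym (zero_one_negligible rec_M)).
Qed.

Lemma recognizes_delta_star M L u w : recognizes M L ->
  final M (delta_star (delta_star (init M) u) w) = L (u ++ w).
Proof. by move=> rec_M; rewrite -delta_star_cat -rec_M. Qed.

Definition indist M (p q : state M) : Prop :=
  forall w, final M (delta_star p w) = final M (delta_star q w).

Lemma indist_delta_star M (p q : state M) u :
  indist p q -> indist (delta_star p u) (delta_star q u).
Proof. by move=> pq w; rewrite -!delta_star_cat pq. Qed.

Section Quotient.
Variables (M : dfa A) (L : seq A -> bool).
Hypotheses (acc_M : accessible M) (rec_M : recognizes M L).

Definition indistb (p q : state M) : bool :=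
  if excluded_middle_informative (indist p q) then true else false.

Lemma indistbP p q : reflect (indist p q) (indistb p q).
Proof. by rewrite /indistb; case: excluded_middle_informative => h; constructor. Qed.

Definition class_rep (x : state M) : state M := odflt x [pick y | indistb x y].

Lemma indist_class_rep x : indist x (class_rep x).
Proof. by rewrite /class_rep; case: pickP => [y /indistbP|]. Qed.

Lemma class_rep_indist x y : indist x y -> class_rep x = class_rep y.
Proof.
move=> xy; rewrite /class_rep (@eq_pick _ _ (indistb y)) => [|z].
  by case: pickP => // /(_ y) /indistbP; case.
by apply/indistbP/indistbP => [xz w | yz w]; rewrite -?xz ?xy // -yz xy.
Qed.

Lemma class_rep_idem x : class_rep (class_rep x) == class_rep x.
Proof. by apply/eqP/esym/class_rep_indist/indist_class_rep. Qed.

Definition quotient_state := {x : state M | class_rep x == x}.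

Definition quot (x : state M) : quotient_state := exist (fun y => class_rep y == y) (class_rep x) (class_rep_idem x).

Lemma quot_indist x y : indist x y -> quot x = quot y.
Proof. by move=> xy; apply: val_inj; rewrite /= (class_rep_indist xy). Qed.

Definition quotient_dfa : dfa A :=
  DFA (quot (init M)) (fun x a => quot (trans (val x) a)) (fun x => final M (val x)).

Lemma quotient_delta_star x w : @delta_star A quotient_dfa (quot x) w = quot (delta_star x w).
Proof.
elim: w x => //= a w IHw x; rewrite IHw; apply: quot_indist.
by move=> v; apply/esym/(indist_delta_star (a :: w) (indist_class_rep x)).
Qed.

Lemma quotient_accessible : accessible quotient_dfa.
Proof.
move=> x; have [w def_x] := acc_M (val x); exists w.
by rewrite quotient_delta_star def_x; apply: val_inj; apply/eqP/(valP x).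
Qed.

Lemma quotient_recognizes : recognizes quotient_dfa L.
Proof.
move=> w; rewrite -rec_M /accepts /= quotient_delta_star.
exact/esym/(indist_class_rep _ [::]).
Qed.

Lemma card_quotient_lt (p q : state M) : p != q -> indist p q -> #|state quotient_dfa| < #|state M|.
Proof.
move=> neq_pq pq; rewrite card_sig -(cardC [pred x | class_rep x == x]) -addn1 leq_add2l.
apply/card_gt0P; have [rep_p | nrep_p] := eqVneq (class_rep p) p; last first.
  by exists p; rewrite !inE /= nrep_p.
by exists q; rewrite !inE /= -(class_rep_indist pq) rep_p.
Qed.

End Quotient.

Lemma minimal_indist_eq M L : minimal_automaton_of M L ->
  forall p q : state M, indist p q -> p = q.
Proof.
case=> acc_M rec_M min_M p q pq; apply/eqP/negPn/negP => neq_pq.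
have := min_M _ (quotient_accessible acc_M) (quotient_recognizes rec_M).
by rewrite leqNgt (card_quotient_lt neq_pq pq).
Qed.

Lemma zero_automaton_sink M : zero_automaton M ->
  exists2 s : state M, sink_state s & exists w, forall p, delta_star p w = s.
Proof.
case=> [[w [s0 sync]] [s sink_s]]; exists s => //; exists w => p.
by rewrite sync -(sync s) sink_delta_star.
Qed.

Lemma sink_synchronising M (s : state M) :
  sink_state s -> (forall q, reachable q s) -> synchronising M.
Proof.
move=> sink_s reach_s.
suff [w sync] : exists w, forall q, q \in enum (state M) -> delta_star q w = s.
  by exists w, s => q; apply: sync; rewrite mem_enum.
elim: (enum _) => [|q qs [w sync]]; first by exists [::].
have [v qv] := reach_s (delta_star q w); exists (w ++ v) => r.
by rewrite inE delta_star_cat => /predU1P [-> // | /sync ->]; apply: sink_delta_star.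
Qed.

Lemma zero_automaton_with_zero M L :
  recognizes M L -> zero_automaton M -> language_with_zero L.
Proof.
move=> rec_M /zero_automaton_sink [s sink_s [w sync]]; exists w => m.
by split=> x y; rewrite -!rec_M /accepts !delta_star_cat !sync !sink_delta_star.
Qed.

Lemma zero_automaton_quasi_zero M : zero_automaton M -> quasi_zero M.
Proof.
move=> /zero_automaton_sink [s sink_s [w sync]].
have sink_only q : in_sink_union q -> q = s.
  move=> /in_sink_unionP /recurrentP rec_q.
  by have [u <-] := rec_q s (ex_intro _ w (sync q)); apply: sink_delta_star.
by case: (boolP (final M s)) => [fin_s | nfin_s]; [left | right] => q /sink_only ->.
Qed.

Lemma minimal_zero_automaton_with_zero M L :
  minimal_automaton_of M L -> language_with_zero L -> zero_automaton M.
Proof.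
move=> min_M [z zero_z]; have [acc_M rec_M _] := min_M.
set s := delta_star (init M) z.
have absorb x m : delta_star (init M) (x ++ z ++ m) = s.
  apply: (minimal_indist_eq min_M) => w; rewrite !(recognizes_delta_star _ _ rec_M).
  by rewrite -catA (proj1 (zero_z m)) catA (proj2 (zero_z x) [::]).
split; last by exists s => a; rewrite -{2}[s](absorb [::] [:: a]) /= delta_star_cat.
exists z, s => p; have [x <-] := acc_M p.
by rewrite -delta_star_cat -[x ++ z]cats0 -catA absorb.
Qed.

Lemma minimal_zero_automaton_quasi_zero M L :
  minimal_automaton_of M L -> quasi_zero M -> zero_automaton M.
Proof.
move=> min_M q0_M.
have [b final_rec] : exists b, forall q, recurrent q -> final M q = b.
  by case: q0_M => [fin|nfin]; [exists true | exists false] => q /in_sink_unionP;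
    [apply: fin | move/nfin/negbTE].
have [w0 rec_s] := exists_recurrent (init M); set s := delta_star _ w0 in rec_s.
have rec_eq_s q : recurrent q -> q = s.
  move=> rec_q; apply: (minimal_indist_eq min_M) => w.
  by rewrite !final_rec // recurrent_delta_star.
have sink_s : sink_state s by move=> a; apply/rec_eq_s/recurrent_trans.
split; last by exists s.
apply: (sink_synchronising sink_s) => q; have [w rec_qw] := exists_recurrent q.
by exists w; apply: rec_eq_s.
Qed.

End Automata.

Theorem theorem1 (A : finType) (hA : 0 < #|A|) (L : seq A -> bool)
  (hreg : regular L) (ML : dfa A) (hML : minimal_automaton_of ML L) :
  [<-> zero_automaton ML;
       language_with_zero L;
       zero_one_language L;
       exists M : dfa A, [/\ accessible M, recognizes M L & quasi_zero M]].
Proof.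
have [acc_ML rec_ML _] := hML.
have zero_one_ML := quasi_zero_zero_one hA acc_ML rec_ML.
tfae.
- exact: zero_automaton_with_zero rec_ML.
- move=> /(minimal_zero_automaton_with_zero hML) /zero_automaton_quasi_zero.
  by move=> /zero_one_ML; split.
- by case=> _ /zero_one_ML q0_ML; exists ML.
- case=> M [acc_M rec_M /(quasi_zero_zero_one hA acc_M rec_M) /zero_one_ML].
  exact: minimal_zero_automaton_quasi_zero hML.
Qed.
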